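(* Consider the distributed associative memory setting described in the context, with agents running the DAM-TOGD update with learning rate $\eta_{n,t}=c/\sqrt{t-\tau_{n,\min}}$ for some constant $c>0$. Then $$\mathrm{Reg}(T)\le\sum_{n\in\mathcal{N}}\Big(2cQ_n\sqrt{T+\Delta\tau_n}+\frac{B^2}{2c}\sqrt{T}+P_n c + C_n\Big),$$ so that $\mathrm{Reg}(T)=\mathcal{O}\big(\sqrt{T+\Delta\tau_n}+\sqrt{T}\big)$, where $Q_n = \frac{K_n}{2}\sum_{m\in\mathcal{W}_n} L_m + |\mathcal{W}_n|\, K_n^2 \sum_{m\in\mathcal{W}_n}\tau_{n,m}$, $P_n = |\mathcal{W}_n|^2 K_n^2\,\tau_{n,\max}^2$, $C_n = \frac{\Delta\tau_n}{2}\big( K_n\sum_{m\in\mathcal{W}_n} L_m + |\mathcal{W}_n|\, B^2\big)$, with $K_n = \max_{m\in\mathcal{W}_n} w_{n,m}L_m$, $\tau_{n,\min}=\min_{m\in\mathcal{W}_n}\tau_{n,m}$, $\tau_{n,\max}=\max_{m\in\mathcal{W}_n}\tau_{n,m}$, $\Delta\tau_n=\tau_{n,\max}-\tau_{n,\min}$, and $|\mathcal{W}_n|$ the cardinality of $\mathcal{W}_n$.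
   Context: There are $N$ agents indexed by $\mathcal{N}=\{1,\dots,N\}$. At each time $t=1,2,\dots$, agent $m$ has a convex loss function $f_{m,t}:\mathcal{X}\to\mathbb{R}$, which only agent $m$ can evaluate. The feasible set $\mathcal{X}$ (a set of matrices) is closed, convex and bounded with diameter $B$, and $\|\nabla f_{m,t}(\mathbf{X})\|_F\le L_m$ for all $m$, $t$ and $\mathbf{X}\in\mathcal{X}$, with finite $L_m>0$. Norms are Frobenius norms and $\Pi_{\mathcal{X}}$ denotes Euclidean (Frobenius) projection onto $\mathcal{X}$. A row-stochastic matrix $\mathbf{W}$ with entries $w_{n,m}\in[0,1]$, $\sum_m w_{n,m}=1$, is given; $\mathcal{W}_n=\{m\in\mathcal{N}: w_{n,m}>0\}$. Agent $n$ maintains iterates $\mathbf{X}_{n,t}\in\mathcal{X}$ and its cumulative loss is $\mathcal{L}_n^T(\mathbf{X}_n^T)=\sum_{t=1}^T\sum_{m\in\mathcal{W}_n} w_{n,m} f_{m,t}(\mathbf{X}_{n,t})$. Let $\mathbf{U}_n^*\in\arg\min_{\mathbf{U}\in\mathcal{X}}\sum_{t=1}^T\sum_{m\in\mathcal{W}_n} w_{n,m}f_{m,t}(\mathbf{U})$, and define the regret $\mathrm{Reg}(T)=\sum_{n\in\mathcal{N}}\big(\mathcal{L}_n^T(\mathbf{X}_n^T)-\mathcal{L}_n^T(\mathbf{U}_n^* )\big)$ (with $\mathcal{L}_n^T(\mathbf{U}_n^* )$ meaning the constant sequence $\mathbf{U}_n^*$). Agents communicate over a connected undirected graph $\mathcal{G}=(\mathcal{N},\mathcal{E})$.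 For each $n$, a Steiner tree $\mathcal{T}_n$ in $\mathcal{G}$ rooted at $n$ and containing paths from $n$ to every agent of $\mathcal{W}_n$ is fixed; $\tilde\tau_{n,m}$ is the number of edges on the path in $\mathcal{T}_n$ from $n$ to $m$ (so $\tilde\tau_{n,n}=0$), and $\tau_{n,m}=2\tilde\tau_{n,m}$ is the round-trip delay: each message takes one time step per edge, so agent $n$ obtains $\nabla f_{m,s}(\mathbf{X}_{n,s})$ at time $s+\tau_{n,m}$. DAM-TOGD: starting from an initial point $\mathbf{X}_{n,1}\in\mathcal{X}$, each agent $n$ updates, for $t\ge1$, $$\mathbf{X}_{n,t+1}=\Pi_{\mathcal{X}}\Big[\mathbf{X}_{n,t}-\eta_{n,t}\sum_{m\in\mathcal{W}_n} w_{n,m}\nabla f_{m,t-\tau_{n,m}}(\mathbf{X}_{n,t-\tau_{n,m}})\,\mathbb{1}_{\{t>\tau_{n,m}\}}\Big],$$ where $\eta_{n,t}>0$ is the learning rate. *)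

From HB Require Import structures.
From mathcomp Require Import all_boot all_order all_algebra.
From mathcomp Require Import all_classical all_reals all_analysis.
Set Implicit Arguments. Unset Strict Implicit. Unset Printing Implicit Defensive.
Import Order.TTheory GRing.Theory Num.Theory.
Local Open Scope ring_scope.

Section DAM.
Variables (R : realType) (p q : nat).

Definition dam_frob_dot (A B : 'M[R]_(p, q)) : R := \sum_i \sum_j A i j * B i j.
Definition dam_frob (A : 'M[R]_(p, q)) : R := Num.sqrt (dam_frob_dot A A).

Definition dam_convex_set (S : set 'M[R]_(p, q)) :=
  forall X Y (l : R), S X -> S Y -> 0 <= l <= 1 -> S (l *: X + (1 - l) *: Y).

Definition dam_diam_le (S : set 'M[R]_(p, q)) (B : R) :=
  forall X Y, S X -> S Y -> dam_frob (X - Y) <= B.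

Definition dam_is_proj (S : set 'M[R]_(p, q)) (proj : 'M[R]_(p, q) -> 'M[R]_(p, q)) :=
  forall Y, S (proj Y) /\ forall Z, S Z -> dam_frob (Y - proj Y) <= dam_frob (Y - Z).
End DAM.

Section Consts.
Variables (R : realType) (N : nat) (w : 'M[R]_N) (L : 'I_N -> R) (tau : 'I_N -> 'I_N -> nat).

Definition dam_inW (n m : 'I_N) : bool := 0 < w n m.
Definition dam_cardW (n : 'I_N) : nat := #|[set m | dam_inW n m]|.
Definition dam_K (n : 'I_N) : R := \big[Num.max/0]_(m | dam_inW n m) (w n m * L m).
Definition dam_tau_max (n : 'I_N) : nat := \max_(m | dam_inW n m) tau n m.
Definition dam_tau_min (n : 'I_N) : nat := \big[minn/dam_tau_max n]_(m | dam_inW n m) tau n m.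
Definition dam_dtau (n : 'I_N) : nat := dam_tau_max n - dam_tau_min n.
Definition dam_sumL (n : 'I_N) : R := \sum_(m | dam_inW n m) L m.
Definition dam_Q (n : 'I_N) : R :=
  dam_K n / 2 * dam_sumL n + (dam_cardW n)%:R * dam_K n ^+ 2 * (\sum_(m | dam_inW n m) tau n m)%:R.
Definition dam_P (n : 'I_N) : R := (dam_cardW n)%:R ^+ 2 * dam_K n ^+ 2 * (dam_tau_max n)%:R ^+ 2.
Definition dam_C (B : R) (n : 'I_N) : R :=
  (dam_dtau n)%:R / 2 * (dam_K n * dam_sumL n + (dam_cardW n)%:R * B ^+ 2).
Definition dam_eta (c : R) (n : 'I_N) (t : nat) : R :=
  c / Num.sqrt (t%:R - (dam_tau_min n)%:R).
End Consts.

(* Fix an agent n.  By convexity its regret is at most the linearized regret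
   sum_t sum_m w_nm <g_m(X_t), X_t - U>.  The gradient of f_m at X_s enters the
   update only at time s + tau_nm, so each term is compared with
   <g_m(X_s), X_(s + tau_nm) - U>: the difference is at most tau_nm projected steps,
   each of length at most eta |W_n| K_n (the tau-part of Q_n), and the last
   tau_nm - tau_min gradients, which never enter an update before T, cost at most
   Delta tau_n w_nm L_m B each (this gives C_n).  What remains is the linearized
   regret of projected online gradient descent on the aggregated delayed gradients,
   started at time tau_min + 1 with steps c / sqrt (i + 1); telescoping bounds it by
   B^2 sqrt T / (2 c) + c K_n (sum_m L_m) sqrt T. *)

From HB Require Import structures.
From mathcomp Require Import all_boot all_order all_algebra.
From mathcomp Require Import all_classical all_reals all_analysis.
From mathcomp Require Import ring lra zify.
Import Order.TTheory GRing.Theory Num.Theory.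
Local Open Scope ring_scope.
Set Implicit Arguments. Unset Strict Implicit. Unset Printing Implicit Defensive.

Lemma sqr_le_mul_of_quadratic_ge0 (R : realFieldType) (a b d : R) : 0 <= d ->
  (forall l : R, 0 <= a - 2 * l * b + l ^+ 2 * d) -> b ^+ 2 <= a * d.
Proof.
move=> d_ge0; have [->|d_neq0] := eqVneq d 0 => quad_ge0.
  have [->|b_neq0] := eqVneq b 0; first by rewrite expr0n mulr0.
  have := quad_ge0 ((a + 1) / (2 * b)); rewrite mulr0 addr0.
  have -> : 2 * ((a + 1) / (2 * b)) * b = a + 1 by field; rewrite b_neq0.
  lra.
have d_gt0 : 0 < d by rewrite lt_def d_neq0 d_ge0.
have := quad_ge0 (b / d).
have -> : a - 2 * (b / d) * b + (b / d) ^+ 2 * d = a - b ^+ 2 / d.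
  by field; rewrite d_neq0.
by rewrite subr_ge0 ler_pdivrMr.
Qed.

Section FrobeniusInnerProduct.
Variables (R : realType) (p q : nat).
Implicit Types (A B C : 'M[R]_(p, q)) (k : R).
Local Notation dot := (@dam_frob_dot R p q).
Local Notation frob := (@dam_frob R p q).

Lemma frob_dotC A B : dot A B = dot B A.
Proof. by apply: eq_bigr => i _; apply: eq_bigr => j _; rewrite mulrC. Qed.

Lemma frob_dotDl A B C : dot (A + B) C = dot A C + dot B C.
Proof.
rewrite /dam_frob_dot -big_split; apply: eq_bigr => i _.
by rewrite -big_split; apply: eq_bigr => j _; rewrite !mxE mulrDl.
Qed.

Lemma frob_dotZl k A B : dot (k *: A) B = k * dot A B.
Proof.
rewrite /dam_frob_dot mulr_sumr; apply: eq_bigr => i _.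
by rewrite mulr_sumr; apply: eq_bigr => j _; rewrite !mxE mulrA.
Qed.

Lemma frob_dot0l B : dot 0 B = 0.
Proof. by rewrite -(scale0r 0) frob_dotZl mul0r. Qed.

Lemma frob_dotNl A B : dot (- A) B = - dot A B.
Proof. by rewrite -scaleN1r frob_dotZl mulN1r. Qed.

Lemma frob_dotBl A B C : dot (A - B) C = dot A C - dot B C.
Proof. by rewrite frob_dotDl frob_dotNl. Qed.

Lemma frob_dotDr A B C : dot C (A + B) = dot C A + dot C B.
Proof. by rewrite frob_dotC frob_dotDl !(frob_dotC C). Qed.

Lemma frob_dotBr A B C : dot C (A - B) = dot C A - dot C B.
Proof. by rewrite frob_dotC frob_dotBl !(frob_dotC C). Qed.

Lemma frob_dotZr k A B : dot B (k *: A) = k * dot B A.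
Proof. by rewrite frob_dotC frob_dotZl frob_dotC. Qed.

Lemma frob_dot_suml (I : Type) (r : seq I) (P : pred I) (F : I -> 'M[R]_(p, q)) C :
  dot (\sum_(i <- r | P i) F i) C = \sum_(i <- r | P i) dot (F i) C.
Proof. by apply: (big_morph (dot^~ C)); [move=> A B; exact: frob_dotDl | exact: frob_dot0l]. Qed.

Lemma frob_dotxx_ge0 A : 0 <= dot A A.
Proof. by apply: sumr_ge0 => i _; apply: sumr_ge0 => j _; apply: sqr_ge0. Qed.

Lemma frob_dot_expandD A B : dot (A + B) (A + B) = dot A A + 2 * dot A B + dot B B.
Proof. by rewrite !frob_dotDl !frob_dotDr (frob_dotC B A); ring. Qed.

Lemma frob_dot_expandBZ A B k :
  dot (A - k *: B) (A - k *: B) = dot A A - 2 * k * dot A B + k ^+ 2 * dot B B.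
Proof. by rewrite !frob_dotBl !frob_dotBr !frob_dotZl !frob_dotZr (frob_dotC B A); ring. Qed.

Lemma frob_ge0 A : 0 <= frob A.
Proof. exact: sqrtr_ge0. Qed.

Lemma frob_sqr A : frob A ^+ 2 = dot A A.
Proof. by rewrite sqr_sqrtr // frob_dotxx_ge0. Qed.

Lemma frob_le_of_dot A B : dot A A <= dot B B -> frob A <= frob B.
Proof. exact: ler_wsqrtr. Qed.

Lemma frob_dot_le A B : dot A B <= frob A * frob B.
Proof.
have CS : dot A B ^+ 2 <= dot A A * dot B B.
  apply: sqr_le_mul_of_quadratic_ge0 (frob_dotxx_ge0 B) _ => l.
  by rewrite -frob_dot_expandBZ frob_dotxx_ge0.
apply: le_trans (ler_norm _) _.
by rewrite -sqrtr_sqr -sqrtrM ?frob_dotxx_ge0 // ler_wsqrtr.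
Qed.

Lemma frob0 : frob 0 = 0.
Proof. by rewrite /dam_frob frob_dot0l sqrtr0. Qed.

Lemma frobZ k A : frob (k *: A) = `|k| * frob A.
Proof.
by rewrite /dam_frob frob_dotZl frob_dotZr mulrA -expr2 sqrtrM ?sqr_ge0 // sqrtr_sqr.
Qed.

Lemma frobN A : frob (- A) = frob A.
Proof. by rewrite -scaleN1r frobZ normrN normr1 mul1r. Qed.

Lemma frobD A B : frob (A + B) <= frob A + frob B.
Proof.
rewrite -(ler_pXn2r (n := 2)) ?nnegrE ?addr_ge0 ?frob_ge0 //.
rewrite frob_sqr frob_dot_expandD sqrrD !frob_sqr.
by have := frob_dot_le A B; lra.
Qed.

Lemma frob_sum (I : Type) (r : seq I) (P : pred I) (F : I -> 'M[R]_(p, q)) :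
  frob (\sum_(i <- r | P i) F i) <= \sum_(i <- r | P i) frob (F i).
Proof.
elim/big_rec2: _ => [|i y1 y2 _ IH]; first by rewrite frob0.
exact: le_trans (frobD _ _) (lerD (lexx _) IH).
Qed.

Lemma frob_sub_chain (X : nat -> 'M[R]_(p, q)) (s k : nat) :
  frob (X s - X (s + k)%N) <= \sum_(0 <= j < k) frob (X (s + j)%N - X (s + j).+1).
Proof.
elim: k => [|k IH]; first by rewrite big_geq // addn0 subrr frob0.
rewrite big_nat_recr //= -(subrK (X (s + k)%N) (X s)) -addrA addnS.
exact: le_trans (frobD _ _) (lerD IH (lexx _)).
Qed.

End FrobeniusInnerProduct.

Lemma le0_of_le_small_multiples (R : realFieldType) (x d : R) : 0 <= d ->
  (forall l, 0 < l <= 1 -> x <= l * d) -> x <= 0.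
Proof.
move=> d_ge0 x_le; rewrite leNgt; apply/negP => x_gt0.
pose l := Num.min 1 (x / (d + 1)).
have l_gt0 : 0 < l by rewrite lt_min ltr01 divr_gt0 //; lra.
have l_le1 : l <= 1 by rewrite ge_min lexx.
have l_small : l <= x / (d + 1) by rewrite ge_min lexx orbT.
have := x_le l; rewrite l_gt0 l_le1 => /(_ isT) x_le_ld.
have : l * d <= x / (d + 1) * d by rewrite ler_wpM2r.
have : x / (d + 1) * d < x.
  by rewrite mulrAC ltr_pdivrMr ?ltr_pM2l //; lra.
lra.
Qed.

Section Projection.
Variables (R : realType) (p q : nat) (S : set 'M[R]_(p, q)).
Variable proj : 'M[R]_(p, q) -> 'M[R]_(p, q).
Hypotheses (S_convex : dam_convex_set S) (projP : dam_is_proj S proj).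
Local Notation dot := (@dam_frob_dot R p q).

Lemma proj_variational Y U : S U -> dot (Y - proj Y) (U - proj Y) <= 0.
Proof.
move=> SU; have [S_PY PY_min] := projP Y.
apply: (le0_of_le_small_multiples (frob_dotxx_ge0 (U - proj Y))) => l /andP[l_gt0 l_le1].
have S_mid : S (l *: U + (1 - l) *: proj Y) by apply: S_convex; rewrite // (ltW l_gt0).
have := PY_min _ S_mid; rewrite ler_sqrt ?frob_dotxx_ge0 //.
have -> : Y - (l *: U + (1 - l) *: proj Y) = (Y - proj Y) - l *: (U - proj Y).
  by apply/matrixP => i j; rewrite !mxE; ring.
rewrite frob_dot_expandBZ.
set x := dot (Y - proj Y) (U - proj Y); set D := dot (U - proj Y) (U - proj Y) => le_sq.
have : l * (2 * x) <= l * (l * D).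
  have -> : l * (2 * x) = 2 * l * x by ring.
  have -> : l * (l * D) = l ^+ 2 * D by ring.
  lra.
rewrite ler_pM2l // => two_x_le.
have := mulr_ge0 (ltW l_gt0) (frob_dotxx_ge0 (U - proj Y)); rewrite -/D; lra.
Qed.

Lemma proj_sqdist_le Y U : S U -> dot (proj Y - U) (proj Y - U) <= dot (Y - U) (Y - U).
Proof.
move=> SU; have := proj_variational Y SU.
have -> : Y - U = (Y - proj Y) + (proj Y - U) by rewrite addrA subrK.
rewrite (frob_dot_expandD (Y - proj Y)).
have -> : dot (Y - proj Y) (proj Y - U) = - dot (Y - proj Y) (U - proj Y).
  by rewrite -(opprB U) frob_dotC frob_dotNl frob_dotC.
by have := frob_dotxx_ge0 (Y - proj Y); lra.
Qed.

End Projection.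

Lemma inv_sqrt_le_sqrt_diff (R : rcfType) (y : R) : 1 <= y ->
  (Num.sqrt y)^-1 <= 2 * (Num.sqrt y - Num.sqrt (y - 1)).
Proof.
move=> y_ge1.
have sy_gt0 : 0 < Num.sqrt y by rewrite sqrtr_gt0; lra.
have sy_sqr : Num.sqrt y ^+ 2 = y by rewrite sqr_sqrtr //; lra.
have sy1_sqr : Num.sqrt (y - 1) ^+ 2 = y - 1 by rewrite sqr_sqrtr //; lra.
have := sqrtr_ge0 (y - 1); have := sqr_ge0 (Num.sqrt y - Num.sqrt (y - 1)).
by rewrite -div1r ler_pdivrMr //; nra.
Qed.

(* Terms with [i.+1 + u <= a] vanish: the square root of a nonpositive number
   and the inverse of [0] are both [0]. *)
Lemma sum_inv_sqrt_le (R : rcfType) (u a M : nat) :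
  \sum_(0 <= i < M) (Num.sqrt ((i.+1 + u)%:R - a%:R : R))^-1
    <= 2 * Num.sqrt ((M + u)%:R - a%:R).
Proof.
elim: M => [|M IH]; first by rewrite big_geq // mulr_ge0 ?sqrtr_ge0.
rewrite big_nat_recr //=.
have [le_a|lt_a] := leqP (M.+1 + u) a.
  have sqrt0 k : (k <= a)%N -> Num.sqrt (k%:R - a%:R : R) = 0.
    by move=> le_ka; apply/eqP; rewrite sqrtr_eq0 subr_le0 ler_nat.
  rewrite (sqrt0 _ le_a) invr0 addr0 mulr0.
  by rewrite (sqrt0 (M + u)%N) ?mulr0 in IH; last lia.
set y : R := (M.+1 + u)%:R - a%:R.
have y_ge1 : 1 <= y by rewrite /y -(natrB R (ltnW lt_a)) (ler_nat R 1); lia.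
have y_pred : ((M + u)%:R - a%:R : R) = y - 1 by rewrite /y addSn -addn1 natrD; lra.
rewrite y_pred in IH.
have := inv_sqrt_le_sqrt_diff y_ge1; lra.
Qed.

Lemma sum_delayed_reindex (V : zmodType) (F : nat -> V) (d a T : nat) : (a <= d)%N ->
  \sum_(0 <= i < T) (if (d < (i + a).+1)%N then F ((i + a).+1 - d)%N else 0)
  = \sum_(0 <= i < T - (d - a)) F i.+1.
Proof.
move=> le_ad; elim: T => [|T IH]; first by rewrite !big_geq.
rewrite big_nat_recr //= IH.
have [le_T|lt_T] := leqP (d - a) T.
  have -> : (T.+1 - (d - a) = (T - (d - a)).+1)%N by lia.
  rewrite big_nat_recr //= ifT; last by lia.
  by congr (_ + F _); lia.
by rewrite ifF ?addr0; [congr (\sum_(0 <= i < _) _); lia | apply/negbTE; lia].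
Qed.

Lemma sum_diff_mul_nondecr_le (R : realDomainType) (D al : nat -> R) (b : R) (n : nat) :
  (forall i, 0 <= D i <= b) -> (forall i, 0 <= al i) -> (forall i, al i <= al i.+1) ->
  \sum_(0 <= i < n.+1) (D i - D i.+1) * al i <= b * al n.
Proof.
move=> D_bnd al_ge0 al_nondecr.
suff : \sum_(0 <= i < n.+1) (D i - D i.+1) * al i + D n.+1 * al n <= b * al n.
  by have := mulr_ge0 (proj1 (andP (D_bnd n.+1))) (al_ge0 n); lra.
elim: n => [|n IH]; first by rewrite big_nat1; have := D_bnd 0%N; have := al_ge0 0%N; nra.
rewrite big_nat_recr //=.
by have := D_bnd n.+1; have := al_nondecr n; have := al_ge0 n; nra.
Qed.

Lemma sqr_convex_comb_le (R : realFieldType) (I : finType) (P : pred I) (w x : I -> R) :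
  (forall i, P i -> 0 <= w i) -> \sum_(i | P i) w i = 1 ->
  (\sum_(i | P i) w i * x i) ^+ 2 <= \sum_(i | P i) w i * x i ^+ 2.
Proof.
move=> w_ge0 w_sum1.
have sum_left : \sum_(i | P i) \sum_(k | P k) w i * w k * x i ^+ 2 = \sum_(i | P i) w i * x i ^+ 2.
  apply: eq_bigr => i _; rewrite -[RHS]mulr1 -w_sum1 mulr_sumr.
  by apply: eq_bigr => k _; ring.
have sum_right : \sum_(i | P i) \sum_(k | P k) w i * w k * x k ^+ 2 = \sum_(i | P i) w i * x i ^+ 2.
  rewrite exchange_big /= -sum_left.
  by apply: eq_bigr => i _; apply: eq_bigr => k _; ring.
rewrite expr2 mulr_suml.
under eq_bigr do rewrite mulr_sumr.
have : 2 * \sum_(i | P i) \sum_(k | P k) (w i * x i) * (w k * x k) <=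
       \sum_(i | P i) \sum_(k | P k) w i * w k * x i ^+ 2 +
       \sum_(i | P i) \sum_(k | P k) w i * w k * x k ^+ 2.
  rewrite -big_split mulr_sumr /=; apply: ler_sum => i Pi.
  rewrite -big_split mulr_sumr /=; apply: ler_sum => k Pk.
  have := mulr_ge0 (w_ge0 i Pi) (w_ge0 k Pk); have := sqr_ge0 (x i - x k); nra.
rewrite sum_left sum_right; lra.
Qed.

Section Agent.
Variables (R : realType) (p q N : nat) (S : set 'M[R]_(p, q)) (B : R).
Variables (f : 'I_N -> nat -> 'M[R]_(p, q) -> R) (g : 'I_N -> nat -> 'M[R]_(p, q) -> 'M[R]_(p, q)).
Variables (L : 'I_N -> R) (w : 'M[R]_N) (tau : 'I_N -> 'I_N -> nat).
Variables (proj : 'M[R]_(p, q) -> 'M[R]_(p, q)) (c : R).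
Variables (X : nat -> 'M[R]_(p, q)) (U : 'M[R]_(p, q)) (T : nat) (n : 'I_N).

Local Notation dot := (@dam_frob_dot R p q).
Local Notation frob := (@dam_frob R p q).
Local Notation P := (dam_inW w n).
Local Notation a := (dam_tau_min w tau n).
Local Notation K := (dam_K w L n).
Local Notation Wc := ((dam_cardW w n)%:R : R).
Local Notation sL := (dam_sumL w L n).
Local Notation eta := (dam_eta w tau c n).
Local Notation dtau := (dam_dtau w tau n).

Definition agg_grad t := \sum_(m | dam_inW w n m) w n m *:
  (if (tau n m < t)%N then g m (t - tau n m)%N (X (t - tau n m)%N) else 0).

Hypotheses (S_convex : dam_convex_set S) (S_diam : dam_diam_le S B) (projP : dam_is_proj S proj).
Hypothesis grad_convex : forall m t Y Z, (1 <= t)%N -> S Y -> S Z ->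
  f m t Y + dot (g m t Y) (Z - Y) <= f m t Z.
Hypotheses (L_gt0 : forall m, 0 < L m)
  (grad_bounded : forall m t Y, (1 <= t)%N -> S Y -> frob (g m t Y) <= L m).
Hypotheses (w_01 : forall m, 0 <= w n m <= 1) (w_sum1 : \sum_m w n m = 1) (c_gt0 : 0 < c).
Hypotheses (X_in_S : forall t, (1 <= t)%N -> S (X t))
  (X_step : forall t, (1 <= t)%N -> X t.+1 = proj (X t - eta t *: agg_grad t)).
Hypothesis SU : S U.

Let c_ge0 : 0 <= c := ltW c_gt0.
Let L_ge0 m : 0 <= L m := ltW (L_gt0 m).

Lemma tau_min_le m : P m -> (a <= tau n m)%N.
Proof. by move=> Pm; apply: (@bigmin_le_cond _ nat). Qed.

Lemma tau_le_max m : P m -> (tau n m <= dam_tau_max w tau n)%N.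
Proof. exact: leq_bigmax_cond. Qed.

Lemma wL_le_K m : P m -> w n m * L m <= K.
Proof. exact: le_bigmax_cond. Qed.

Lemma K_ge0 : 0 <= K.
Proof. exact: bigmax_ge_id. Qed.

Lemma w_ge0 m : 0 <= w n m.
Proof. by case/andP: (w_01 m). Qed.

Lemma sum_inW_w : \sum_(m | P m) w n m = 1.
Proof.
rewrite -w_sum1 [RHS](bigID P) /= [X in _ = _ + X]big1 ?addr0 // => m not_Pm.
by apply/eqP; rewrite eq_le w_ge0 andbT leNgt.
Qed.

Lemma sum_inW_const x : \sum_(m | P m) x = Wc * x.
Proof.
rewrite (eq_bigl (mem [set m | P m])); last by move=> m; rewrite !inE.
by rewrite sumr_const mulr_natl.
Qed.

Lemma sumL_ge0 : 0 <= sL.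
Proof. by apply: sumr_ge0 => m _; apply: L_ge0. Qed.

Lemma diam_ge0 : 0 <= B.
Proof. exact: le_trans (frob_ge0 _) (S_diam (X_in_S (leqnn 1)) (X_in_S (leqnn 1))). Qed.

Lemma sqdist_bounded t : (1 <= t)%N -> 0 <= dot (X t - U) (X t - U) <= B ^+ 2.
Proof.
move=> t_ge1; rewrite frob_dotxx_ge0 -frob_sqr lerXn2r ?nnegrE ?frob_ge0 ?diam_ge0 //.
exact: S_diam (X_in_S t_ge1) SU.
Qed.

Lemma sum_wL_le : \sum_(m | P m) w n m * L m <= Wc * K.
Proof. by rewrite -sum_inW_const; apply: ler_sum => m; apply: wL_le_K. Qed.

Lemma frob_agg_grad_le t : frob (agg_grad t) <= \sum_(m | P m) w n m * L m.
Proof.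
apply: le_trans (frob_sum _ _ _) (ler_sum _ _) => m Pm.
rewrite frobZ ger0_norm ?w_ge0 // ler_wpM2l ?w_ge0 //.
case: ifP => [lt_tau_t|_]; last by rewrite frob0 L_ge0.
by apply: grad_bounded; [|apply: X_in_S]; rewrite subn_gt0.
Qed.

Lemma dot_agg_grad_le t : dot (agg_grad t) (agg_grad t) <= K * sL.
Proof.
rewrite -frob_sqr.
apply: le_trans (_ : _ <= (\sum_(m | P m) w n m * L m) ^+ 2) _.
  rewrite lerXn2r ?nnegrE ?frob_ge0 ?frob_agg_grad_le //.
  by rewrite sumr_ge0 // => m _; rewrite mulr_ge0 ?w_ge0 ?L_ge0.
apply: le_trans (sqr_convex_comb_le L (fun m _ => w_ge0 m) sum_inW_w) _.
rewrite /dam_sumL mulr_sumr; apply: ler_sum => m Pm.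
by rewrite expr2 mulrA ler_wpM2r ?wL_le_K ?L_ge0.
Qed.

Lemma eta_ge0 t : 0 <= eta t.
Proof. by rewrite divr_ge0 ?sqrtr_ge0. Qed.

Lemma frob_step_le t : (1 <= t)%N -> frob (X t - X t.+1) <= eta t * (Wc * K).
Proof.
move=> t_ge1.
have := proj_sqdist_le S_convex projP (X t - eta t *: agg_grad t) (X_in_S t_ge1).
rewrite -X_step // addrAC subrr add0r => /frob_le_of_dot.
rewrite -opprB frobN frobN frobZ ger0_norm ?eta_ge0 // => /le_trans-> //.
by rewrite ler_wpM2l ?eta_ge0 // (le_trans (frob_agg_grad_le t) sum_wL_le).
Qed.

Local Notation sqdist i := (dot (X (i + a).+1 - U) (X (i + a).+1 - U)).

(* No gradient reaches agent [n] before time [a.+1]; at time [(i + a).+1] the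
   learning rate is [c / sqrt i.+1]. *)
Lemma ogd_step i :
  dot (agg_grad (i + a).+1) (X (i + a).+1 - U)
  <= (sqdist i - sqdist i.+1) * (Num.sqrt i.+1%:R / (2 * c))
     + c / Num.sqrt i.+1%:R * (K * sL / 2).
Proof.
set t := (i + a).+1; set s := Num.sqrt i.+1%:R.
have s_gt0 : 0 < s by rewrite sqrtr_gt0 ltr0Sn.
have eta_t : eta t = c / s by rewrite /dam_eta -natrB; [congr (_ / Num.sqrt _%:R)|]; lia.
have := proj_sqdist_le S_convex projP (X t - eta t *: agg_grad t) SU.
rewrite -X_step // addrAC frob_dot_expandBZ (frob_dotC (X t - U) (agg_grad t)) eta_t.
set e := c / s; set x := dot (agg_grad t) (X t - U) => descent.
have := ler_wpM2l (sqr_ge0 e) (dot_agg_grad_le t).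
have -> : x = 2 * e * x * (s / (2 * c)) by rewrite /e; field; rewrite !gt_eqF.
have -> : e * (K * sL / 2) = e ^+ 2 * (K * sL) * (s / (2 * c)).
  by rewrite /e; field; rewrite !gt_eqF.
rewrite -mulrDl => grad_sq.
by rewrite ler_wpM2r ?divr_ge0 ?sqrtr_ge0 ?mulr_ge0 ?c_ge0 //; lra.
Qed.

Lemma ogd_regret_le :
  \sum_(0 <= i < T) dot (agg_grad (i + a).+1) (X (i + a).+1 - U)
  <= B ^+ 2 / (2 * c) * Num.sqrt T%:R + c * K * sL * Num.sqrt T%:R.
Proof.
apply: le_trans (ler_sum_nat (fun i _ => ogd_step i)) _.
rewrite big_split /=; apply: lerD.
  case: T => [|T']; first by rewrite big_geq // sqrtr0 mulr0.
  apply: le_trans (@sum_diff_mul_nondecr_le _ (fun i => sqdist i)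
    (fun i => Num.sqrt i.+1%:R / (2 * c)) (B ^+ 2) T' _ _ _) _.
  - by move=> i; apply: sqdist_bounded.
  - by move=> i; rewrite divr_ge0 ?sqrtr_ge0 ?mulr_ge0.
  - by move=> i; rewrite ler_wpM2r ?invr_ge0 ?mulr_ge0 // ler_wsqrtr // ler_nat.
  - by rewrite mulrA mulrAC.
rewrite -mulr_suml -mulr_sumr.
have := sum_inv_sqrt_le R 0 0 T.
under eq_bigr do rewrite addn0 subr0.
rewrite addn0 subr0 => sum_inv_le.
have -> : c * K * sL * Num.sqrt T%:R = c * (2 * Num.sqrt T%:R) * (K * sL / 2) by field.
by rewrite ler_wpM2r ?ler_wpM2l ?divr_ge0 ?mulr_ge0 ?K_ge0 ?sumL_ge0.
Qed.

Lemma sum_eta_le M k : (M + k <= T + a)%N ->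
  \sum_(0 <= i < M) eta (i.+1 + k)%N <= 2 * c * Num.sqrt T%:R.
Proof.
move=> le_MkT; rewrite /dam_eta -mulr_sumr -mulrA mulrCA ler_wpM2l //.
apply: le_trans (sum_inv_sqrt_le R k a M) _.
by rewrite ler_wpM2l // ler_wsqrtr // lerBlDr -natrD ler_nat.
Qed.

Lemma delay_drift_le m : P m ->
  w n m * \sum_(0 <= i < T - (tau n m - a)) dot (g m i.+1 (X i.+1)) (X i.+1 - X (i.+1 + tau n m)%N)
  <= 2 * c * Wc * K ^+ 2 * Num.sqrt T%:R * (tau n m)%:R.
Proof.
move=> Pm; have le_a_tau := tau_min_le Pm.
have rhs_ge0 : 0 <= 2 * c * Wc * K ^+ 2 * Num.sqrt T%:R * (tau n m)%:R.
  by rewrite !mulr_ge0 ?sqrtr_ge0 ?c_ge0 ?K_ge0.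
have [lt_T_tau|le_tau_T] := ltnP T (tau n m - a).
  by rewrite big_geq ?mulr0 //; lia.
apply: le_trans (_ : _ <= w n m * (L m * (Wc * K) *
    \sum_(0 <= k < tau n m) (2 * c * Num.sqrt T%:R))) _.
  rewrite ler_wpM2l ?w_ge0 //.
  apply: le_trans (_ : _ <= \sum_(0 <= i < T - (tau n m - a))
      L m * (Wc * K) * \sum_(0 <= k < tau n m) eta (i.+1 + k)%N) _.
    apply: ler_sum_nat => i _; apply: le_trans (frob_dot_le _ _) _.
    rewrite -mulrA ler_pM ?frob_ge0 //; first by apply: grad_bounded => //; apply: X_in_S.
    apply: le_trans (frob_sub_chain X i.+1 (tau n m)) _.
    rewrite mulr_sumr; apply: ler_sum_nat => k _.
    by rewrite mulrC frob_step_le.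
  rewrite -mulr_sumr ler_wpM2l ?mulr_ge0 ?K_ge0 ?L_ge0 // exchange_big /=.
  by apply: ler_sum_nat => k /andP[_ lt_k_tau]; apply: sum_eta_le; lia.
have Z_ge0 : 0 <= Wc * K * (2 * c * Num.sqrt T%:R) * (tau n m)%:R.
  by rewrite !mulr_ge0 ?sqrtr_ge0 ?c_ge0 ?K_ge0.
have := ler_wpM2r Z_ge0 (wL_le_K Pm).
by rewrite sumr_const_nat subn0 -mulr_natr; lra.
Qed.

Lemma delay_tail_le m : P m ->
  w n m * \sum_(T - (tau n m - a) <= i < T) dot (g m i.+1 (X i.+1)) (X i.+1 - U)
  <= dtau%:R * (w n m * L m * B).
Proof.
move=> Pm; have := tau_min_le Pm; have := tau_le_max Pm => le_tau_max le_a_tau.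
apply: le_trans (_ : _ <= w n m * \sum_(T - (tau n m - a) <= i < T) (L m * B)) _.
  rewrite ler_wpM2l ?w_ge0 // ler_sum_nat // => i _.
  apply: le_trans (frob_dot_le _ _) _.
  rewrite ler_pM ?frob_ge0 //; first by apply: grad_bounded => //; apply: X_in_S.
  by apply: S_diam => //; apply: X_in_S.
have wLB_ge0 : 0 <= w n m * L m * B by rewrite !mulr_ge0 ?w_ge0 ?L_ge0 ?diam_ge0.
have : (T - (T - (tau n m - a)))%:R <= dtau%:R :> R by rewrite ler_nat /dam_dtau; lia.
move/(ler_wpM2r wLB_ge0).
by rewrite sumr_const_nat -[L m * B *+ _]mulr_natl; lra.
Qed.

Lemma delayed_split_le m : P m ->
  w n m * \sum_(0 <= i < T) dot (g m i.+1 (X i.+1)) (X i.+1 - U)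
  <= w n m * \sum_(0 <= i < T - (tau n m - a)) dot (g m i.+1 (X i.+1)) (X (i.+1 + tau n m)%N - U)
     + 2 * c * Wc * K ^+ 2 * Num.sqrt T%:R * (tau n m)%:R + dtau%:R * (w n m * L m * B).
Proof.
move=> Pm; rewrite (big_cat_nat _ (n := (T - (tau n m - a))%N)) ?leq_subr //= mulrDr.
have -> : \sum_(0 <= i < T - (tau n m - a)) dot (g m i.+1 (X i.+1)) (X i.+1 - U)
  = \sum_(0 <= i < T - (tau n m - a)) dot (g m i.+1 (X i.+1)) (X (i.+1 + tau n m)%N - U)
    + \sum_(0 <= i < T - (tau n m - a)) dot (g m i.+1 (X i.+1)) (X i.+1 - X (i.+1 + tau n m)%N).
  rewrite -big_split; apply: eq_bigr => i _ /=; rewrite -frob_dotDr.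
  by congr dot; apply/matrixP => r s; rewrite !mxE; ring.
by rewrite mulrDr; have := delay_drift_le Pm; have := delay_tail_le Pm; lra.
Qed.

(* Regroup the delayed gradient terms by arrival time s + tau_nm. *)
Lemma sum_delayed_grads :
  \sum_(m | P m) w n m * \sum_(0 <= i < T - (tau n m - a))
      dot (g m i.+1 (X i.+1)) (X (i.+1 + tau n m)%N - U)
  = \sum_(0 <= i < T) dot (agg_grad (i + a).+1) (X (i + a).+1 - U).
Proof.
transitivity (\sum_(m | P m) \sum_(0 <= i < T) w n m *
   (if (tau n m < (i + a).+1)%N then
      dot (g m ((i + a).+1 - tau n m)%N (X ((i + a).+1 - tau n m)%N))
          (X (((i + a).+1 - tau n m) + tau n m)%N - U) else 0)).
  apply: eq_bigr => m Pm; rewrite -mulr_sumr; congr (_ * _).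
  rewrite (sum_delayed_reindex (fun s => dot (g m s (X s)) (X (s + tau n m)%N - U))) //.
  exact: tau_min_le.
rewrite exchange_big /=; apply: eq_bigr => i _.
rewrite frob_dot_suml; apply: eq_bigr => m Pm.
rewrite frob_dotZl; case: ifP => [lt_tau|_]; last by rewrite frob_dot0l.
by rewrite subnK // ltnW.
Qed.

Lemma agent_regret_linearized_le :
  \sum_(1 <= t < T.+1) \sum_(m | P m) w n m * f m t (X t)
   - \sum_(1 <= t < T.+1) \sum_(m | P m) w n m * f m t U
  <= B ^+ 2 / (2 * c) * Num.sqrt T%:R + c * K * sL * Num.sqrt T%:R
     + 2 * c * Wc * K ^+ 2 * Num.sqrt T%:R * (\sum_(m | P m) tau n m)%:R
     + dtau%:R * \sum_(m | P m) w n m * L m * B.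
Proof.
apply: le_trans (_ : _ <= \sum_(1 <= t < T.+1) \sum_(m | P m)
    w n m * dot (g m t (X t)) (X t - U)) _.
  rewrite -sumrB; apply: ler_sum_nat => t /andP[t_ge1 _].
  rewrite -sumrB; apply: ler_sum => m Pm; rewrite -mulrBr ler_wpM2l ?w_ge0 //.
  have := grad_convex m t_ge1 (X_in_S t_ge1) SU.
  by rewrite (frob_dotBr U (X t)) (frob_dotBr (X t) U); lra.
rewrite big_add1 /= exchange_big /=.
apply: le_trans (_ : _ <= \sum_(m | P m)
   (w n m * \sum_(0 <= i < T - (tau n m - a)) dot (g m i.+1 (X i.+1)) (X (i.+1 + tau n m)%N - U)
     + 2 * c * Wc * K ^+ 2 * Num.sqrt T%:R * (tau n m)%:R + dtau%:R * (w n m * L m * B))) _.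
  by apply: ler_sum => m Pm; rewrite -mulr_sumr; apply: delayed_split_le.
rewrite !big_split /= sum_delayed_grads -!mulr_sumr -natr_sum.
by have := ogd_regret_le; lra.
Qed.

Lemma sum_wLB_le : \sum_(m | P m) w n m * L m * B <= (K * sL + Wc * B ^+ 2) / 2.
Proof.
rewrite -sum_inW_const /dam_sumL mulr_sumr -big_split mulr_suml /=.
apply: ler_sum => m Pm.
have wL_ge0 : 0 <= w n m * L m by rewrite mulr_ge0 ?w_ge0 ?L_ge0.
have wL_le_L : w n m * L m <= L m by rewrite ler_piMl ?L_ge0 //; case/andP: (w_01 m).
have := ler_pM wL_ge0 wL_ge0 (wL_le_K Pm) wL_le_L.
by have := sqr_ge0 (w n m * L m - B); lra.
Qed.

Lemma agent_regret_le :
  \sum_(1 <= t < T.+1) \sum_(m | P m) w n m * f m t (X t)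
   - \sum_(1 <= t < T.+1) \sum_(m | P m) w n m * f m t U
  <= 2 * c * dam_Q w L tau n * Num.sqrt (T%:R + dtau%:R)
     + B ^+ 2 / (2 * c) * Num.sqrt T%:R
     + dam_P w L tau n * c + dam_C w L tau B n.
Proof.
apply: le_trans agent_regret_linearized_le _.
have Q_ge0 : 0 <= dam_Q w L tau n.
  by rewrite addr_ge0 ?mulr_ge0 ?divr_ge0 ?K_ge0 ?sumL_ge0 ?sqr_ge0.
have P_ge0 : 0 <= dam_P w L tau n * c by rewrite !mulr_ge0 ?sqr_ge0 ?c_ge0 ?K_ge0.
have delay_cost : c * K * sL * Num.sqrt T%:R
     + 2 * c * Wc * K ^+ 2 * Num.sqrt T%:R * (\sum_(m | P m) tau n m)%:R
   = 2 * c * dam_Q w L tau n * Num.sqrt T%:R by rewrite /dam_Q; field.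
have : 2 * c * dam_Q w L tau n * Num.sqrt T%:R
    <= 2 * c * dam_Q w L tau n * Num.sqrt (T%:R + dtau%:R).
  by rewrite ler_wpM2l ?mulr_ge0 ?c_ge0 // ler_wsqrtr // lerDl.
have : dtau%:R * \sum_(m | P m) w n m * L m * B <= dam_C w L tau B n.
  have -> : dam_C w L tau B n = dtau%:R * ((K * sL + Wc * B ^+ 2) / 2).
    by rewrite /dam_C; ring.
  by rewrite ler_wpM2l ?sum_wLB_le.
lra.
Qed.

End Agent.

Theorem corollary1 (R : realType) (p q N : nat)
  (S : set 'M[R]_(p, q)) (B : R)
  (f : 'I_N -> nat -> 'M[R]_(p, q) -> R)
  (g : 'I_N -> nat -> 'M[R]_(p, q) -> 'M[R]_(p, q))
  (L : 'I_N -> R) (w : 'M[R]_N)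
  (tt : 'I_N -> 'I_N -> nat) (tau : 'I_N -> 'I_N -> nat)
  (proj : 'M[R]_(p, q) -> 'M[R]_(p, q))
  (c : R) (Xs : 'I_N -> nat -> 'M[R]_(p, q))
  (U : 'I_N -> 'M[R]_(p, q)) (T : nat) :
  (* feasible set: closed, convex, nonempty, diameter B *)
  closed (S : set 'M[R^o]_(p, q)) -> dam_convex_set S -> dam_diam_le S B ->
  (* Euclidean projection onto S *)
  dam_is_proj S proj ->
  (* g m t is the gradient of the convex loss f m t on S (first-order convexity) *)
  (forall m t X Y, (1 <= t)%N -> S X -> S Y ->
      f m t X + dam_frob_dot (g m t X) (Y - X) <= f m t Y) ->
  (* bounded gradients *)
  (forall m, 0 < L m) ->
  (forall m t X, (1 <= t)%N -> S X -> dam_frob (g m t X) <= L m) ->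
  (* row-stochastic weight matrix *)
  (forall n m, 0 <= w n m <= 1) ->
  (forall n, \sum_m w n m = 1) ->
  (* round-trip delays along the Steiner trees *)
  (forall n, tt n n = 0%N) ->
  (forall n m, tau n m = (2 * tt n m)%N) ->
  (* DAM-TOGD with eta_{n,t} = c / sqrt (t - tau_{n,min}) *)
  0 < c ->
  (forall n, S (Xs n 1%N)) ->
  (forall n t, (1 <= t)%N ->
     Xs n t.+1 = proj (Xs n t - dam_eta w tau c n t *:
        \sum_(m | dam_inW w n m) w n m *:
          (if (tau n m < t)%N then g m (t - tau n m)%N (Xs n (t - tau n m)%N) else 0))) ->
  (* U n is a minimizer of the cumulative loss of agent n over S *)
  (forall n, S (U n) /\ forall V, S V ->
     \sum_(1 <= t < T.+1) \sum_(m | dam_inW w n m) w n m * f m t (U n)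
       <= \sum_(1 <= t < T.+1) \sum_(m | dam_inW w n m) w n m * f m t V) ->
  \sum_n (\sum_(1 <= t < T.+1) \sum_(m | dam_inW w n m) w n m * f m t (Xs n t)
          - \sum_(1 <= t < T.+1) \sum_(m | dam_inW w n m) w n m * f m t (U n))
  <= \sum_n (2 * c * dam_Q w L tau n * Num.sqrt (T%:R + (dam_dtau w tau n)%:R)
             + B ^+ 2 / (2 * c) * Num.sqrt T%:R
             + dam_P w L tau n * c + dam_C w L tau B n).
Proof.
move=> _ S_convex S_diam projP grad_convex L_gt0 grad_bounded w_01 w_sum1 _ _ c_gt0
  X1_in_S X_step U_opt.
apply: ler_sum => n _.
have X_in_S t : (1 <= t)%N -> S (Xs n t).
  case: t => [//|[_|t _]]; first exact: X1_in_S.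
  by rewrite X_step //; exact: (proj1 (projP _)).
exact: (agent_regret_le T S_convex S_diam projP grad_convex L_gt0 grad_bounded
  (w_01 n) (w_sum1 n) c_gt0 X_in_S (X_step n) (proj1 (U_opt n))).
Qed.
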